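(* Let $(\lambda_0,\dots,\lambda_n)\in\mathbb{C}^{n+1}$ and assume $E_{(\lambda_0,\dots,\lambda_n)}$ is closed under complex conjugation. Let $M_n:=\max\{|\mathrm{Im}\,\lambda_j|: j=0,\dots,n\}$. Then for all real $a<b$ with $b-a<\pi/M_n$ (interpreted as no restriction when $M_n=0$), $E_{(\lambda_0,\dots,\lambda_n)}$ is an extended Chebyshev system over the interval $[a,b]$.
   Context: $E_{(\lambda_0,\dots,\lambda_n)}$ denotes the space of all $f\in C^\infty(\mathbb{R},\mathbb{C})$ with $(\frac{d}{dx}-\lambda_0)\cdots(\frac{d}{dx}-\lambda_n)f=0$ (dimension $n+1$). A zero of order $k$ at $a$ means $f(a)=\dots=f^{(k-1)}(a)=0$, $f^{(k)}(a)\ne0$. $E_{(\lambda_0,\dots,\lambda_n)}$ is an extended Chebyshev system over a set $A\subset\mathbb{R}$ if every nonzero element has at most $n$ zeros in $A$ counted with multiplicity. Closed under complex conjugation means $\overline f\in E_{(\lambda_0,\dots,\lambda_n)}$ whenever $f\in E_{(\lambda_0,\dots,\lambda_n)}$. *)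

From Stdlib Require Import Reals Lra List.
Open Scope R_scope.

Definition Cpx : Type := (R * R)%type.
Definition Re (z : Cpx) : R := fst z.
Definition Im (z : Cpx) : R := snd z.
Definition C0 : Cpx := (0, 0).
Definition Cadd (z w : Cpx) : Cpx := (fst z + fst w, snd z + snd w).
Definition Csub (z w : Cpx) : Cpx := (fst z - fst w, snd z - snd w).
Definition Cmul (z w : Cpx) : Cpx :=
  (fst z * fst w - snd z * snd w, fst z * snd w + snd z * fst w).
Definition Cconj (z : Cpx) : Cpx := (fst z, - snd z).

Definition IsDeriv (f g : R -> Cpx) : Prop :=
  forall x, derivable_pt_lim (fun t => fst (f t)) x (fst (g x)) /\
            derivable_pt_lim (fun t => snd (f t)) x (snd (g x)).

Definition IsDerivSeq (f : R -> Cpx) (D : nat -> R -> Cpx) : Prop :=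
  (forall x, D 0%nat x = f x) /\ (forall k, IsDeriv (D k) (D (S k))).

Definition Smooth (f : R -> Cpx) : Prop := exists D, IsDerivSeq f D.

(* OpKer lam k f : (d/dx - lam 0) ... (d/dx - lam (k-1)) f = 0,
   the innermost factor (d/dx - lam (k-1)) being applied first *)
Fixpoint OpKer (lam : nat -> Cpx) (k : nat) (f : R -> Cpx) : Prop :=
  match k with
  | O => forall x, f x = C0
  | S k' => exists g, IsDeriv f g /\
             OpKer lam k' (fun x => Csub (g x) (Cmul (lam k') (f x)))
  end.

Definition InE (lam : nat -> Cpx) (n : nat) (f : R -> Cpx) : Prop :=
  Smooth f /\ OpKer lam (S n) f.

Definition ConjClosed (lam : nat -> Cpx) (n : nat) : Prop :=
  forall f, InE lam n f -> InE lam n (fun x => Cconj (f x)).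

Definition ZeroOfOrder (f : R -> Cpx) (a : R) (k : nat) : Prop :=
  exists D, IsDerivSeq f D /\
    (forall j, (j < k)%nat -> D j a = C0) /\ D k a <> C0.

Definition ExtChebyshevOn (lam : nat -> Cpx) (n : nat) (a b : R) : Prop :=
  forall f, InE lam n f -> (exists x, f x <> C0) ->
  forall zs : list (R * nat),
    NoDup (map fst zs) ->
    (forall z, In z zs -> a <= fst z <= b /\ (1 <= snd z)%nat /\
                          ZeroOfOrder f (fst z) (snd z)) ->
    (fold_right (fun z acc => snd z + acc) 0 zs <= n)%nat.

Fixpoint MaxAbsIm (lam : nat -> Cpx) (n : nat) : R :=
  match n with
  | O => Rabs (Im (lam 0%nat))
  | S m => Rmax (MaxAbsIm lam m) (Rabs (Im (lam (S m))))
  end.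

From Stdlib Require Import Reals Lra Lia List Permutation Sorted Wf_nat.
From Stdlib Require Import FunctionalExtensionality Factorial.
Open Scope R_scope.

(** Let L be the list of exponents lam_0, ..., lam_n and
    P_L = prod_(mu in L) (d/dx - mu), so that E = ker P_L.
    1. Closure of E under conjugation makes L conjugation-symmetric as a multiset:
       if conj nu occurred fewer times (m) than nu, then x^m e^(nu x) / m! would lie in
       E while its conjugate x^m e^(conj nu x) / m! is not annihilated by P_L.
    2. Hence P_L maps real functions to real functions; Re f = (f + conj f)/2 and
       Im f = Re (-i f) are real functions annihilated by P_L which inherit every zero
       of f with its multiplicity.
    3. Generalized Rolle theorem ([zero_bound_symmetric]): a real function annihilated
       by P_L with at least |L| zeros in [a,b] is zero.  By induction on L, a real
       factor d/dx - r is removed by Rolle's theorem for e^(-rx) g, and a conjugate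
       pair by two Rolle steps with the weight e^(-al x) sin(be x + c), which is
       positive on [a,b] exactly because |Im mu| (b - a) < pi; each step loses at most
       one zero, and the kernel of the removed factors forces g = 0.
    4. If f had more than n zeros, Re f and Im f would vanish, so f = 0.
    The file first develops the tools: real calculus and vanishing to order k,
    counting zeros with Rolle's theorem, the real and pair reduction steps, complex
    derivative sequences and the factored operator P_L, and multiplicities of exponents
    under conjugation (step 1). *)

(** Real derivatives.  [IsDerivR f g] says that g is the derivative of f at every
    point; the [dpl_*] lemmas restate the Stdlib rules with the function written as a
    lambda term, so that they apply directly to goals. *)

Definition IsDerivR (f g : R -> R) : Prop := forall x, derivable_pt_lim f x (g x).

Lemma dpl_ext f x l l' : derivable_pt_lim f x l -> l = l' -> derivable_pt_lim f x l'.
Proof. now intros H <-. Qed.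

Lemma dpl_plus f g x a b : derivable_pt_lim f x a -> derivable_pt_lim g x b ->
  derivable_pt_lim (fun t => f t + g t) x (a + b).
Proof. intros; now apply (derivable_pt_lim_plus f g). Qed.

Lemma dpl_minus f g x a b : derivable_pt_lim f x a -> derivable_pt_lim g x b ->
  derivable_pt_lim (fun t => f t - g t) x (a - b).
Proof. intros; now apply (derivable_pt_lim_minus f g). Qed.

Lemma dpl_mult f g x a b : derivable_pt_lim f x a -> derivable_pt_lim g x b ->
  derivable_pt_lim (fun t => f t * g t) x (a * g x + f x * b).
Proof. intros; now apply (derivable_pt_lim_mult f g). Qed.

Lemma dpl_scal c f x a : derivable_pt_lim f x a ->
  derivable_pt_lim (fun t => c * f t) x (c * a).
Proof. intros; now apply (derivable_pt_lim_scal f c). Qed.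

Lemma dpl_div f g x a b : derivable_pt_lim f x a -> derivable_pt_lim g x b -> g x <> 0 ->
  derivable_pt_lim (fun t => f t / g t) x ((a * g x - b * f x) / (g x)²).
Proof. intros; now apply (derivable_pt_lim_div f g). Qed.

Lemma dpl_affine p c x : derivable_pt_lim (fun t => p * t + c) x p.
Proof.
  apply (dpl_ext _ _ (p * 1 + 0)); [|ring].
  apply dpl_plus; [apply dpl_scal, derivable_pt_lim_id | apply derivable_pt_lim_const].
Qed.

Lemma dpl_exp_lin p x : derivable_pt_lim (fun t => exp (p * t)) x (p * exp (p * x)).
Proof.
  apply (dpl_ext _ _ (exp (p * x) * (p * 1))); [|ring].
  apply (derivable_pt_lim_comp (fun t => p * t) exp).
  - apply dpl_scal, derivable_pt_lim_id.
  - apply derivable_pt_lim_exp.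
Qed.

Lemma dpl_sin_affine q c x :
  derivable_pt_lim (fun t => sin (q * t + c)) x (q * cos (q * x + c)).
Proof.
  apply (dpl_ext _ _ (cos (q * x + c) * q)); [|ring].
  apply (derivable_pt_lim_comp (fun t => q * t + c) sin);
    [apply dpl_affine | apply derivable_pt_lim_sin].
Qed.

Lemma dpl_cos_affine q c x :
  derivable_pt_lim (fun t => cos (q * t + c)) x (- q * sin (q * x + c)).
Proof.
  apply (dpl_ext _ _ (- sin (q * x + c) * q)); [|ring].
  apply (derivable_pt_lim_comp (fun t => q * t + c) cos);
    [apply dpl_affine | apply derivable_pt_lim_cos].
Qed.

Lemma IsDerivR_unique f g1 g2 : IsDerivR f g1 -> IsDerivR f g2 -> g1 = g2.
Proof. intros H1 H2; extensionality x; eapply uniqueness_limite; eauto. Qed.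

Lemma IsDerivR_lin c1 c2 f g f' g' : IsDerivR f f' -> IsDerivR g g' ->
  IsDerivR (fun t => c1 * f t + c2 * g t) (fun t => c1 * f' t + c2 * g' t).
Proof. intros H1 H2 x. apply dpl_plus; apply dpl_scal; auto. Qed.

Lemma IsDerivR_mul f g f' g' : IsDerivR f f' -> IsDerivR g g' ->
  IsDerivR (fun t => f t * g t) (fun t => f' t * g t + f t * g' t).
Proof. intros H1 H2 x. apply dpl_mult; auto. Qed.

Lemma rolle f f' x y : x < y ->
  (forall t, x <= t <= y -> derivable_pt_lim f t (f' t)) ->
  f x = f y -> exists c, x < c < y /\ f' c = 0.
Proof.
  intros Hxy Hd He. destruct (MVT_cor2 f f' x y Hxy Hd) as [c [Hc1 Hc2]].
  exists c; split; auto. rewrite He in Hc1. nra.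
Qed.

Lemma constant_of_deriv_zero f f' : IsDerivR f f' -> (forall t, f' t = 0) ->
  forall x y, f x = f y.
Proof.
  intros Hd H0 x y. destruct (Rtotal_order x y) as [H|[H|H]].
  - destruct (MVT_cor2 f f' x y H) as [c [Hc _]]; [intros; apply Hd|].
    rewrite H0 in Hc. lra.
  - now subst.
  - destruct (MVT_cor2 f f' y x H) as [c [Hc _]]; [intros; apply Hd|].
    rewrite H0 in Hc. lra.
Qed.

Fixpoint DiffTo (k : nat) (g : R -> R) : Prop :=
  match k with O => True | S k' => exists g', IsDerivR g g' /\ DiffTo k' g' end.

Definition SmoothR (g : R -> R) : Prop := forall k, DiffTo k g.

Fixpoint VanishesTo (k : nat) (g : R -> R) (z : R) : Prop :=
  match k with
  | O => True
  | S k' => g z = 0 /\ exists g', IsDerivR g g' /\ VanishesTo k' g' z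
  end.

Lemma DiffTo_pred k g : DiffTo (S k) g -> DiffTo k g.
Proof.
  revert g; induction k; simpl; intros g [g' [Hd Hs]]; auto. exists g'; auto.
Qed.

Lemma VanishesTo_pred k g z : VanishesTo (S k) g z -> VanishesTo k g z.
Proof.
  revert g; induction k; simpl; intros g [H0 [g' [Hd Hs]]]; auto.
  split; auto. exists g'; auto.
Qed.

Lemma VanishesTo_deriv k g g' z :
  IsDerivR g g' -> VanishesTo (S k) g z -> VanishesTo k g' z.
Proof. intros Hd [_ [p [Hp Zp]]]. now rewrite (IsDerivR_unique _ _ _ Hd Hp). Qed.

Lemma DiffTo_ext k f g : (forall t, f t = g t) -> DiffTo k f -> DiffTo k g.
Proof. intros H; replace g with f; auto. extensionality t; auto. Qed.

Lemma VanishesTo_ext k f g z : (forall t, f t = g t) -> VanishesTo k f z -> VanishesTo k g z.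
Proof. intros H; replace g with f; auto. extensionality t; auto. Qed.

Lemma DiffTo_lin k c1 c2 f g :
  DiffTo k f -> DiffTo k g -> DiffTo k (fun t => c1 * f t + c2 * g t).
Proof.
  revert f g; induction k; simpl; auto. intros f g [f' [Hf Sf]] [g' [Hg Sg]].
  exists (fun t => c1 * f' t + c2 * g' t). split; auto. now apply IsDerivR_lin.
Qed.

Lemma VanishesTo_lin k c1 c2 f g z : VanishesTo k f z -> VanishesTo k g z ->
  VanishesTo k (fun t => c1 * f t + c2 * g t) z.
Proof.
  revert f g; induction k; simpl; auto.
  intros f g [f0 [f' [Hf Sf]]] [g0 [g' [Hg Sg]]]. split.
  - rewrite f0, g0; ring.
  - exists (fun t => c1 * f' t + c2 * g' t). split; auto. now apply IsDerivR_lin.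
Qed.

(** Leibniz: a product with a k times differentiable factor keeps the order of vanishing. *)
Lemma VanishesTo_mul k phi g z :
  DiffTo k phi -> VanishesTo k g z -> VanishesTo k (fun t => phi t * g t) z.
Proof.
  revert phi g; induction k; simpl; auto.
  intros phi g [p' [Hp Sp]] [g0 [g' [Hg Zg]]]. split; [rewrite g0; ring|].
  exists (fun t => p' t * g t + phi t * g' t). split; [now apply IsDerivR_mul|].
  apply (VanishesTo_ext _ (fun t => 1 * (p' t * g t) + 1 * (phi t * g' t))); [intros; ring|].
  apply VanishesTo_lin; apply IHk; auto.
  - apply VanishesTo_pred. simpl. split; auto. exists g'; auto.
  - apply DiffTo_pred. simpl. exists p'; auto.
Qed.

Lemma SmoothR_deriv phi : SmoothR phi -> exists phi', IsDerivR phi phi' /\ SmoothR phi'.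
Proof.
  intros H. destruct (H 1%nat) as [p [Hp _]]. exists p; split; auto.
  intros k. destruct (H (S k)) as [q [Hq Sq]]. now rewrite (IsDerivR_unique _ _ _ Hp Hq).
Qed.

Lemma VanishesTo_cancel k phi g z : SmoothR phi -> phi z <> 0 -> DiffTo k g ->
  VanishesTo k (fun t => phi t * g t) z -> VanishesTo k g z.
Proof.
  revert phi g; induction k; simpl; auto.
  intros phi g Sp Hnz [g' [Hg Sg]] [H0 [p [Hp Zp]]]. split.
  { apply Rmult_integral in H0 as [H0|H0]; [contradiction|auto]. }
  exists g'; split; auto.
  destruct (SmoothR_deriv phi Sp) as [phi' [Hphi Sphi']].
  assert (Ep : p = fun t => phi' t * g t + phi t * g' t).
  { apply (IsDerivR_unique (fun t => phi t * g t)); auto. now apply IsDerivR_mul. }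
  subst p.
  assert (Zg : VanishesTo k g z).
  { apply (IHk phi); auto.
    - apply DiffTo_pred; simpl; exists g'; auto.
    - apply VanishesTo_pred. simpl. split; auto.
      exists (fun t => phi' t * g t + phi t * g' t); auto. }
  apply (IHk phi); auto.
  apply (VanishesTo_ext _
    (fun t => 1 * (phi' t * g t + phi t * g' t) + (-1) * (phi' t * g t))); [intros; ring|].
  apply VanishesTo_lin; auto. now apply VanishesTo_mul.
Qed.

Lemma SmoothR_of_seq (G : nat -> R -> R) : (forall j, IsDerivR (G j) (G (S j))) -> SmoothR (G O).
Proof.
  intros Hd k; revert G Hd; induction k; simpl; auto. intros G Hd.
  exists (G 1%nat); split; auto. apply (IHk (fun j => G (S j))); auto.
Qed.

Lemma VanishesTo_of_seq (G : nat -> R -> R) k z : (forall j, IsDerivR (G j) (G (S j))) ->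
  (forall j, (j < k)%nat -> G j z = 0) -> VanishesTo k (G O) z.
Proof.
  revert G; induction k; simpl; auto. intros G Hd Hz. split; [apply Hz; lia|].
  exists (G 1%nat); split; auto.
  apply (IHk (fun j => G (S j))); auto. intros; apply Hz; lia.
Qed.

Definition mult_sum (zs : list (R * nat)) : nat :=
  fold_right (fun z acc => (snd z + acc)%nat) 0%nat zs.

Definition KeySorted (zs : list (R * nat)) : Prop :=
  StronglySorted (fun p q => fst p < fst q) zs.

Definition ZerosIn (a b : R) (h : R -> R) (zs : list (R * nat)) : Prop :=
  forall p, In p zs -> a <= fst p <= b /\ (1 <= snd p)%nat /\ VanishesTo (snd p) h (fst p).

Lemma mult_sum_app l1 l2 : mult_sum (l1 ++ l2) = (mult_sum l1 + mult_sum l2)%nat.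
Proof. induction l1 as [|p l1 IH]; simpl; [reflexivity|]. rewrite IH; lia. Qed.

Lemma mult_sum_perm l l' : Permutation l l' -> mult_sum l = mult_sum l'.
Proof. induction 1; simpl in *; lia. Qed.

Lemma KeySorted_app l1 l2 : KeySorted l1 -> KeySorted l2 ->
  (forall p q, In p l1 -> In q l2 -> fst p < fst q) -> KeySorted (l1 ++ l2).
Proof.
  induction l1 as [|p l1 IH]; simpl; auto. intros H1 H2 H12.
  apply StronglySorted_inv in H1 as [H1 Hp]. constructor.
  - apply IH; auto.
  - rewrite Forall_forall in *. intros q Hq. apply in_app_or in Hq as [Hq|Hq]; auto.
Qed.

Lemma ZerosIn_ext a b f g l : (forall x, f x = g x) -> ZerosIn a b f l -> ZerosIn a b g l.
Proof. intros E; replace g with f; auto; extensionality x; auto. Qed.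

Lemma ZerosIn_witness a b h zs :
  ZerosIn a b h zs -> (1 <= mult_sum zs)%nat -> exists z, a <= z <= b /\ h z = 0.
Proof.
  destruct zs as [|[z k] zs]; simpl; intros Hg Hs; [lia|].
  destruct (Hg (z, k) (or_introl eq_refl)) as [Hz [Hk Hzk]]; simpl in *.
  exists z; split; auto. destruct k; [lia|]. now destruct Hzk.
Qed.

Fixpoint insert (p : R * nat) (l : list (R * nat)) : list (R * nat) :=
  match l with
  | nil => p :: nil
  | q :: l' => if Rlt_dec (fst p) (fst q) then p :: q :: l' else q :: insert p l'
  end.

Fixpoint insertion_sort (l : list (R * nat)) : list (R * nat) :=
  match l with nil => nil | p :: l' => insert p (insertion_sort l') end.

Lemma insert_perm p l : Permutation (insert p l) (p :: l).
Proof.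
  induction l as [|q l IH]; simpl; auto. destruct (Rlt_dec (fst p) (fst q)); auto.
  eapply perm_trans; [apply perm_skip, IH | apply perm_swap].
Qed.

Lemma insertion_sort_perm l : Permutation (insertion_sort l) l.
Proof. induction l; simpl; auto. eapply perm_trans; [apply insert_perm | auto]. Qed.

Lemma insert_sorted p l : KeySorted l -> (forall q, In q l -> fst q <> fst p) ->
  KeySorted (insert p l).
Proof.
  induction l as [|q l IH]; simpl; intros Hs Hn; [repeat constructor|].
  apply StronglySorted_inv in Hs as [Hs Hq]. rewrite Forall_forall in Hq.
  destruct (Rlt_dec (fst p) (fst q)) as [Hlt|Hge].
  - constructor; [constructor; auto; now rewrite Forall_forall|].
    rewrite Forall_forall. intros r [<-|Hr]; auto. specialize (Hq r Hr); lra.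
  - constructor; [apply IH; auto|]. rewrite Forall_forall. intros r Hr.
    apply (Permutation_in _ (insert_perm p l)) in Hr as [<-|Hr]; auto.
    assert (fst q <> fst p) by auto. lra.
Qed.

Lemma insertion_sort_sorted l : NoDup (map fst l) -> KeySorted (insertion_sort l).
Proof.
  induction l as [|p l IH]; simpl; intros Hnd; [constructor|].
  inversion Hnd as [|? ? Hnot Hnd']; subst.
  apply insert_sorted; auto. intros q Hq E. apply Hnot. rewrite <- E.
  apply in_map, (Permutation_in _ (insertion_sort_perm l)), Hq.
Qed.

Lemma surviving_zero a b V z k : a <= z <= b -> (1 <= k)%nat -> VanishesTo (k - 1) V z ->
  exists pre, KeySorted pre /\ ZerosIn a b V pre /\ mult_sum pre = (k - 1)%nat /\
    forall q, In q pre -> fst q = z.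
Proof.
  intros Hz Hk HV. destruct (Nat.eqb_spec k 1) as [->|Hk1].
  - exists nil. split; [constructor|]. split; [intros ? []|]. split; [reflexivity | intros ? []].
  - exists ((z, (k - 1)%nat) :: nil). split; [repeat constructor|].
    split; [|split; [simpl; lia | now intros q [<-|[]]]].
    intros p [<-|[]]; simpl. repeat split; try lra; try lia; auto.
Qed.

(** The extra
    conclusion (every new zero lies right of some old one) is the induction invariant. *)
Lemma rolle_count_aux a b h V :
  (exists V', IsDerivR V V') ->
  (forall z k, a <= z <= b -> (1 <= k)%nat -> VanishesTo k h z -> VanishesTo (k - 1) V z) ->
  (forall x y, a <= x -> x < y -> y <= b -> h x = 0 -> h y = 0 ->
     exists c, x < c < y /\ V c = 0) ->
  forall l, KeySorted l -> ZerosIn a b h l ->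
  exists l', KeySorted l' /\ ZerosIn a b V l' /\ (mult_sum l <= mult_sum l' + 1)%nat /\
    (forall q, In q l' -> exists p, In p l /\ fst p <= fst q).
Proof.
  intros [V' HV] Hord Hbetween l.
  induction l as [|[z k] l1 IH]; intros Hs Hg.
  { exists nil. split; [constructor|]. split; [intros ? []|]. split; [simpl; lia | intros ? []]. }
  apply StronglySorted_inv in Hs as [Hs1 Hz_lt]. rewrite Forall_forall in Hz_lt.
  destruct (IH Hs1 (fun p Hp => Hg p (or_intror Hp))) as [l1' [S1 [G1 [Sum1 Inv1]]]].
  destruct (Hg (z, k) (or_introl eq_refl)) as [Hzab [Hk Hzk]]; simpl in Hzab, Hk, Hzk.
  destruct (surviving_zero a b V z k Hzab Hk (Hord z k Hzab Hk Hzk))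
    as [pre [Sp [Gp [Sump Invp]]]].
  destruct l1 as [|[z2 k2] l2].
  - exists pre. split; [auto|]. split; [auto|]. split; [simpl in *; lia|].
    intros q Hq. exists (z, k); split; [now left | rewrite (Invp q Hq); simpl; lra].
  - (* a new simple zero c of V between z and the next zero z2 of h *)
    destruct (Hg (z2, k2) (or_intror (or_introl eq_refl))) as [Hz2ab [Hk2 Hz2k]].
    simpl in Hz2ab, Hk2, Hz2k.
    assert (Hzz2 : z < z2) by (apply (Hz_lt (z2, k2)); now left).
    destruct (Hbetween z z2) as [c [Hc HVc]]; try lra.
    { destruct k; [lia|]; now destruct Hzk. }
    { destruct k2; [lia|]; now destruct Hz2k. }
    assert (Hbig : forall q, In q l1' -> z2 <= fst q).
    { intros q Hq. destruct (Inv1 q Hq) as [p [[<-|Hp] Hpq]]; simpl in *; auto.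
      apply StronglySorted_inv in Hs1 as [_ Hs1]. rewrite Forall_forall in Hs1.
      specialize (Hs1 p Hp); simpl in Hs1; lra. }
    exists (pre ++ (c, 1%nat) :: l1'). split; [|split; [|split]].
    + apply KeySorted_app; auto.
      * constructor; auto. rewrite Forall_forall. intros q Hq. specialize (Hbig q Hq). simpl; lra.
      * intros p q Hp Hq. rewrite (Invp p Hp). destruct Hq as [<-|Hq]; simpl; [lra|].
        specialize (Hbig q Hq); lra.
    + intros p0 Hp. apply in_app_or in Hp as [Hp|[<-|Hp]]; auto.
      simpl. repeat split; try lra; try lia; auto. exists V'; auto.
    + rewrite mult_sum_app. simpl in *. lia.
    + intros q Hq. apply in_app_or in Hq as [Hq|[<-|Hq]].
      * exists (z, k); split; [now left | rewrite (Invp q Hq); simpl; lra].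
      * exists (z, k); split; [now left | simpl; lra].
      * destruct (Inv1 q Hq) as [p0 [Hp Hpq]]. exists p0; split; [now right | auto].
Qed.

Lemma rolle_count a b h V :
  (exists V', IsDerivR V V') ->
  (forall z k, a <= z <= b -> (1 <= k)%nat -> VanishesTo k h z -> VanishesTo (k - 1) V z) ->
  (forall x y, a <= x -> x < y -> y <= b -> h x = 0 -> h y = 0 ->
     exists c, x < c < y /\ V c = 0) ->
  forall l, KeySorted l -> ZerosIn a b h l ->
  exists l', KeySorted l' /\ ZerosIn a b V l' /\ (mult_sum l <= mult_sum l' + 1)%nat.
Proof.
  intros HV Hord Hbetween l Hs Hg.
  destruct (rolle_count_aux a b h V HV Hord Hbetween l Hs Hg) as [l' [? [? [? _]]]].
  now exists l'.
Qed.

(** Removing a real factor d/dx - r.  Since (e^(-rx) g)' = e^(-rx) (g' - r g),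
    Rolle's theorem puts a zero of g' - r g between two zeros of g. *)
Section RealFactor.

Variables (r : R) (g0 g1 : R -> R).
Hypothesis Hd0 : IsDerivR g0 g1.

Lemma weighted_deriv_real :
  IsDerivR (fun t => exp (- r * t) * g0 t) (fun t => exp (- r * t) * (g1 t - r * g0 t)).
Proof.
  intros t. eapply dpl_ext; [apply dpl_mult; [apply dpl_exp_lin | apply Hd0] | cbv beta; ring].
Qed.

Lemma real_factor_step a b zs : (exists g2, IsDerivR g1 g2) ->
  KeySorted zs -> ZerosIn a b g0 zs ->
  exists l1, KeySorted l1 /\ ZerosIn a b (fun x => g1 x - r * g0 x) l1 /\
    (mult_sum zs <= mult_sum l1 + 1)%nat.
Proof.
  intros [g2 Hd1]. apply rolle_count.
  - exists (fun x => g2 x - r * g1 x). intros x. apply dpl_minus; [|apply dpl_scal]; auto.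
  - intros z [|k] Hz Hk Hzk; [lia|]. simpl. rewrite Nat.sub_0_r.
    apply (VanishesTo_ext _ (fun t => 1 * g1 t + (- r) * g0 t)); [intros; ring|].
    apply VanishesTo_lin; [eapply VanishesTo_deriv | apply VanishesTo_pred]; eauto.
  - intros x y _ Hxy _ Hx Hy.
    destruct (rolle _ _ x y Hxy (fun t _ => weighted_deriv_real t)) as [t [Ht Hq]].
    { cbv beta; rewrite Hx, Hy; ring. }
    exists t; split; auto. pose proof (exp_pos (- r * t)). nra.
Qed.

Lemma real_factor_kernel z : (forall x, g1 x - r * g0 x = 0) -> g0 z = 0 ->
  forall x, g0 x = 0.
Proof.
  intros HK Hz x.
  assert (C : exp (- r * x) * g0 x = exp (- r * z) * g0 z).
  { apply (constant_of_deriv_zero _ _ weighted_deriv_real). intros t; rewrite HK; ring. } rewrite Hz, Rmult_0_r in C. pose proof (exp_pos (- r * x)). nra.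
Qed.

End RealFactor.

(** Removing a conjugate pair of factors (d/dx - mu)(d/dx - conj mu), mu = al + i be,
    which acts on real functions as L g = g'' - 2 al g' + (al^2 + be^2) g.  The weight
    w = e^(-al x) sin(be x + c) and its companion e^(-al x) cos(be x + c) are smooth;
    when sin(be x + c) > 0 on [a,b] the "first integral"
    V = w g' - (al w + be e^(-al x) cos(be x + c)) g satisfies V' = w L g and
    (g e^(-al x) / sin(be x + c))' = V / sin(be x + c)^2, giving two Rolle steps. *)

Definition wsin (al be c x : R) : R := exp (- al * x) * sin (be * x + c).
Definition wcos (al be c x : R) : R := exp (- al * x) * cos (be * x + c).

Lemma wsin_deriv al be c :
  IsDerivR (wsin al be c) (fun x => - al * wsin al be c x + be * wcos al be c x).
Proof.
  intros x; unfold wsin, wcos. eapply dpl_ext;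
    [apply dpl_mult; [apply dpl_exp_lin | apply dpl_sin_affine] | cbv beta; ring].
Qed.

Lemma wcos_deriv al be c :
  IsDerivR (wcos al be c) (fun x => - al * wcos al be c x - be * wsin al be c x).
Proof.
  intros x; unfold wsin, wcos. eapply dpl_ext;
    [apply dpl_mult; [apply dpl_exp_lin | apply dpl_cos_affine] | cbv beta; ring].
Qed.

Lemma weights_DiffTo k : forall al be c,
  DiffTo k (wsin al be c) /\ DiffTo k (wcos al be c).
Proof.
  induction k; intros al be c; simpl; split; auto.
  - eexists; split; [apply wsin_deriv | apply DiffTo_lin; apply IHk].
  - eexists; split; [apply wcos_deriv|].
    apply (DiffTo_ext _ (fun x => (- al) * wcos al be c x + (- be) * wsin al be c x));
      [intros; ring | apply DiffTo_lin; apply IHk].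
Qed.

Lemma wsin_smooth al be c : SmoothR (wsin al be c).
Proof. intros k; apply weights_DiffTo. Qed.

Lemma wcos_smooth al be c : SmoothR (wcos al be c).
Proof. intros k; apply weights_DiffTo. Qed.

Section ConjugatePair.

Variables (al be c a b : R) (g0 g1 g2 L : R -> R).
Hypothesis Hd0 : IsDerivR g0 g1.
Hypothesis Hd1 : IsDerivR g1 g2.
Hypothesis HL : forall x, L x = g2 x - 2 * al * g1 x + (al * al + be * be) * g0 x.
Hypothesis Hsin : forall x, a <= x <= b -> 0 < sin (be * x + c).

Definition first_integral (x : R) : R :=
  wsin al be c x * g1 x + (- al * wsin al be c x - be * wcos al be c x) * g0 x.

(** The companion built on the cosine weight; with [first_integral] it recovers g. *)
Definition first_integral_cos (x : R) : R :=
  wcos al be c x * g1 x + (- al * wcos al be c x + be * wsin al be c x) * g0 x.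

Lemma first_integral_deriv : IsDerivR first_integral (fun x => wsin al be c x * L x).
Proof.
  intros x. unfold first_integral. eapply dpl_ext.
  - apply dpl_plus; apply dpl_mult; [apply wsin_deriv | apply Hd1 | | apply Hd0].
    apply dpl_minus; apply dpl_scal; [apply wsin_deriv | apply wcos_deriv].
  - rewrite HL. cbv beta; ring.
Qed.

Lemma first_integral_cos_deriv : IsDerivR first_integral_cos (fun x => wcos al be c x * L x).
Proof.
  intros x. unfold first_integral_cos. eapply dpl_ext.
  - apply dpl_plus; apply dpl_mult; [apply wcos_deriv | apply Hd1 | | apply Hd0].
    apply dpl_plus; apply dpl_scal; [apply wcos_deriv | apply wsin_deriv].
  - rewrite HL. cbv beta; ring.
Qed.

Lemma wsin_pos x : a <= x <= b -> 0 < wsin al be c x.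
Proof. intros; unfold wsin; apply Rmult_lt_0_compat; [apply exp_pos | auto]. Qed.

Lemma pair_step_first zs : KeySorted zs -> ZerosIn a b g0 zs ->
  exists l1, KeySorted l1 /\ ZerosIn a b first_integral l1 /\
    (mult_sum zs <= mult_sum l1 + 1)%nat.
Proof.
  apply rolle_count.
  - eexists; apply first_integral_deriv.
  - intros z [|k] Hz Hk Hzk; [lia|]. simpl. rewrite Nat.sub_0_r.
    apply (VanishesTo_ext _ (fun t => 1 * (wsin al be c t * g1 t) +
             1 * ((- al * wsin al be c t - be * wcos al be c t) * g0 t)));
      [intros; unfold first_integral; ring|].
    apply VanishesTo_lin; apply VanishesTo_mul.
    + apply wsin_smooth.
    + eapply VanishesTo_deriv; eauto.
    + apply (DiffTo_ext _ (fun t => (- al) * wsin al be c t + (- be) * wcos al be c t));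
        [intros; ring | apply DiffTo_lin; [apply wsin_smooth | apply wcos_smooth]].
    + now apply VanishesTo_pred.
  - intros x y Hax Hxy Hyb Hx Hy.
    set (q := fun t => exp (- al * t) * g0 t / sin (be * t + c)).
    destruct (rolle q (fun t => first_integral t / (sin (be * t + c))²) x y Hxy)
      as [t [Ht Hq]].
    + intros t Ht. unfold q. assert (0 < sin (be * t + c)) by (apply Hsin; lra).
      eapply dpl_ext; [apply dpl_div;
        [apply dpl_mult; [apply dpl_exp_lin | apply Hd0] | apply dpl_sin_affine | lra]|].
      unfold first_integral, wsin, wcos, Rsqr. field. lra.
    + unfold q; rewrite Hx, Hy; unfold Rdiv; ring.
    + exists t; split; auto. assert (0 < sin (be * t + c)) by (apply Hsin; lra).
      assert (0 < (sin (be * t + c))²) by (unfold Rsqr; nra).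
      unfold Rdiv in Hq. apply Rmult_integral in Hq as [Hq|Hq]; auto.
      exfalso; apply Rinv_neq_0_compat in Hq; lra.
Qed.

Lemma pair_step_second l1 : SmoothR L -> (exists L', IsDerivR L L') ->
  KeySorted l1 -> ZerosIn a b first_integral l1 ->
  exists l2, KeySorted l2 /\ ZerosIn a b L l2 /\ (mult_sum l1 <= mult_sum l2 + 1)%nat.
Proof.
  intros SL HL'. apply rolle_count; auto.
  - intros z [|k] Hz Hk Hzk; [lia|]. simpl. rewrite Nat.sub_0_r.
    apply (VanishesTo_cancel k (wsin al be c)); auto using wsin_smooth.
    + pose proof (wsin_pos z Hz); lra.
    + eapply VanishesTo_deriv; [apply first_integral_deriv | exact Hzk].
  - intros x y Hax Hxy Hyb Hx Hy.
    destruct (rolle _ _ x y Hxy (fun t _ => first_integral_deriv t)) as [t [Ht Hq]].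
    { now rewrite Hx, Hy. }
    exists t; split; auto. pose proof (wsin_pos t ltac:(lra)). nra.
Qed.

(** If L g vanishes identically, g has a zero in [a,b] and the first integral has a
    zero, then g = 0: both first integrals are then constant, equal to 0, and
    wcos * V - wsin * V2 = - be e^(-2 al x) g. *)
Lemma pair_kernel z0 z1 : be <> 0 -> (forall x, L x = 0) -> a <= z0 <= b -> g0 z0 = 0 ->
  first_integral z1 = 0 -> forall x, g0 x = 0.
Proof.
  intros Hbe HL0 Hz0 Hg0 HV1 x.
  assert (CV : forall y, first_integral y = 0).
  { intros y. rewrite <- HV1. apply (constant_of_deriv_zero _ _ first_integral_deriv).
    intros t; rewrite HL0; ring. }
  assert (Hg1 : g1 z0 = 0).
  { pose proof (CV z0) as E. unfold first_integral in E. rewrite Hg0 in E.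
    pose proof (wsin_pos z0 Hz0). nra. }
  assert (CV2 : forall y, first_integral_cos y = 0).
  { intros y. replace 0 with (first_integral_cos z0)
      by (unfold first_integral_cos; rewrite Hg0, Hg1; ring).
    apply (constant_of_deriv_zero _ _ first_integral_cos_deriv).
    intros t; rewrite HL0; ring. }
  assert (E : wcos al be c x * first_integral x - wsin al be c x * first_integral_cos x =
              - be * (exp (- al * x))^2 * ((sin (be * x + c))² + (cos (be * x + c))²) * g0 x).
  { unfold first_integral, first_integral_cos, wsin, wcos, Rsqr; ring. }
  rewrite CV, CV2, sin2_cos2 in E.
  assert (Hp : 0 < (exp (- al * x))^2) by (apply pow_lt, exp_pos).
  assert (Hm : (be * (exp (- al * x))^2) * g0 x = 0) by nra.
  apply Rmult_integral in Hm as [Hm|Hm]; auto.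
  apply Rmult_integral in Hm as [Hm|Hm]; lra.
Qed.

End ConjugatePair.

Lemma Cpx_eq (z w : Cpx) : fst z = fst w -> snd z = snd w -> z = w.
Proof. destruct z, w; simpl; intros -> ->; auto. Qed.

Ltac cring := apply Cpx_eq; simpl; ring.

Lemma IsDeriv_unique f g1 g2 : IsDeriv f g1 -> IsDeriv f g2 -> g1 = g2.
Proof.
  intros H1 H2; extensionality x. destruct (H1 x) as [a1 b1], (H2 x) as [a2 b2].
  apply Cpx_eq; eapply uniqueness_limite; eauto.
Qed.

Lemma IsDeriv_add f g f' g' : IsDeriv f f' -> IsDeriv g g' ->
  IsDeriv (fun x => Cadd (f x) (g x)) (fun x => Cadd (f' x) (g' x)).
Proof. intros H1 H2 x; destruct (H1 x), (H2 x); simpl; split; apply dpl_plus; auto. Qed.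

Lemma IsDeriv_sub f g f' g' : IsDeriv f f' -> IsDeriv g g' ->
  IsDeriv (fun x => Csub (f x) (g x)) (fun x => Csub (f' x) (g' x)).
Proof. intros H1 H2 x; destruct (H1 x), (H2 x); simpl; split; apply dpl_minus; auto. Qed.

Lemma IsDeriv_cmul c f f' : IsDeriv f f' ->
  IsDeriv (fun x => Cmul c (f x)) (fun x => Cmul c (f' x)).
Proof.
  intros H1 x; destruct (H1 x); simpl; split;
    [apply dpl_minus | apply dpl_plus]; apply dpl_scal; auto.
Qed.

Lemma IsDeriv_conj f f' : IsDeriv f f' ->
  IsDeriv (fun x => Cconj (f x)) (fun x => Cconj (f' x)).
Proof.
  intros H1 x; destruct (H1 x); simpl; split; auto.
  now apply (derivable_pt_lim_opp (fun t => snd (f t))).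
Qed.

Definition DSeq (D : nat -> R -> Cpx) : Prop := forall k, IsDeriv (D k) (D (S k)).

Lemma DerivSeq_unique f D1 D2 : IsDerivSeq f D1 -> IsDerivSeq f D2 -> D1 = D2.
Proof.
  intros [H1 H2] [G1 G2]. extensionality j. induction j.
  - extensionality x; now rewrite H1, G1.
  - apply (IsDeriv_unique (D1 j)); auto. now rewrite IHj.
Qed.

(** The factored operator.  If D is the derivative sequence of f, then
    [factor_step mu D] is the derivative sequence of f' - mu f, and
    [apply_factors l D] that of prod_(mu in l) (d/dx - mu) f. *)
Definition factor_step (mu : Cpx) (D : nat -> R -> Cpx) : nat -> R -> Cpx :=
  fun j x => Csub (D (S j) x) (Cmul mu (D j x)).

Definition apply_factors (l : list Cpx) (D : nat -> R -> Cpx) : nat -> R -> Cpx :=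
  fold_left (fun D mu => factor_step mu D) l D.

(** [exponents lam k] lists lam (k-1), ..., lam 0, in the order in which [OpKer]
    applies the corresponding factors. *)
Fixpoint exponents (lam : nat -> Cpx) (k : nat) : list Cpx :=
  match k with O => nil | S k' => lam k' :: exponents lam k' end.

Lemma apply_factors_cons mu l D : apply_factors (mu :: l) D = apply_factors l (factor_step mu D).
Proof. reflexivity. Qed.

Lemma apply_factors_app l1 l2 D :
  apply_factors (l1 ++ l2) D = apply_factors l2 (apply_factors l1 D).
Proof. unfold apply_factors; now rewrite fold_left_app. Qed.

Lemma factor_step_comm x y D : factor_step x (factor_step y D) = factor_step y (factor_step x D).
Proof. extensionality j; extensionality t; unfold factor_step. cring. Qed.

(** The factors commute, so only the multiset of exponents matters. *)
Lemma apply_factors_perm l l' : Permutation l l' -> forall D, apply_factors l D = apply_factors l' D.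
Proof.
  induction 1; intros D; auto.
  - now rewrite !apply_factors_cons.
  - now rewrite !apply_factors_cons, factor_step_comm.
  - now rewrite IHPermutation1.
Qed.

Lemma DSeq_factor_step mu D : DSeq D -> DSeq (factor_step mu D).
Proof. intros H k. apply IsDeriv_sub; auto. now apply IsDeriv_cmul. Qed.

Definition lin_comb c1 (D1 : nat -> R -> Cpx) c2 D2 : nat -> R -> Cpx :=
  fun j x => Cadd (Cmul c1 (D1 j x)) (Cmul c2 (D2 j x)).

Lemma DSeq_lin_comb c1 D1 c2 D2 : DSeq D1 -> DSeq D2 -> DSeq (lin_comb c1 D1 c2 D2).
Proof. intros H1 H2 k. apply IsDeriv_add; apply IsDeriv_cmul; auto. Qed.

Lemma apply_factors_lin_comb l c1 D1 c2 D2 :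
  apply_factors l (lin_comb c1 D1 c2 D2) =
  lin_comb c1 (apply_factors l D1) c2 (apply_factors l D2).
Proof.
  revert D1 D2; induction l; intros D1 D2; auto.
  rewrite !apply_factors_cons, <- IHl. f_equal.
  extensionality j; extensionality t; unfold factor_step, lin_comb. cring.
Qed.

Definition zero_seq : nat -> R -> Cpx := fun _ _ => C0.

Lemma apply_factors_zero l : apply_factors l zero_seq = zero_seq.
Proof.
  induction l; auto. rewrite apply_factors_cons. replace (factor_step a zero_seq) with zero_seq; auto.
  extensionality j; extensionality t; unfold factor_step, zero_seq, C0. cring.
Qed.

Lemma OpKer_apply_factors lam k : forall f D, IsDerivSeq f D ->
  OpKer lam k f <-> forall x, apply_factors (exponents lam k) D O x = C0.
Proof.
  induction k; intros f D [HD0 HD]; cbn [exponents OpKer].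
  - split; intros H x; [rewrite HD0 | rewrite <- HD0]; auto.
  - assert (Ef : f = D O) by (extensionality t; auto). subst f.
    rewrite apply_factors_cons,
      <- (IHk (fun t => Csub (D 1%nat t) (Cmul (lam k) (D O t))) (factor_step (lam k) D));
      [|split; [reflexivity | now apply DSeq_factor_step]].
    split.
    + intros [g [Hg Hk]]. now rewrite <- (IsDeriv_unique _ _ _ (HD O) Hg) in Hk.
    + intros Hk. exists (D 1%nat); auto.
Qed.

Definition Ceq_dec (x y : Cpx) : {x = y} + {x <> y}.
Proof. decide equality; apply Req_EM_T. Defined.

Definition mult (l : list Cpx) (nu : Cpx) : nat := count_occ Ceq_dec l nu.

Lemma mult_cons x l nu : mult (x :: l) nu = ((if Ceq_dec x nu then 1 else 0) + mult l nu)%nat.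
Proof.
  unfold mult; destruct (Ceq_dec x nu) as [e|e];
    [rewrite count_occ_cons_eq | rewrite count_occ_cons_neq]; auto.
Qed.

Lemma perm_mult l nu :
  exists rest, Permutation l (repeat nu (mult l nu) ++ rest) /\ ~ In nu rest.
Proof.
  induction l as [|x l [rest [Hp Hn]]]; [now exists nil|].
  rewrite mult_cons. destruct (Ceq_dec x nu) as [->|Hne].
  - exists rest; split; auto. simpl; now apply perm_skip.
  - exists (x :: rest); split.
    + now apply Permutation_cons_app.
    + intros [H|H]; auto.
Qed.

(** Test functions x^k e^(nu x) / k!.  Here e^(nu x) = wcos + i wsin with
    al = - Re nu, be = Im nu, c = 0. *)
Definition cexp (nu : Cpx) (x : R) : Cpx :=
  (wcos (- fst nu) (snd nu) 0 x, wsin (- fst nu) (snd nu) 0 x).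

Definition rscale (r : R) (z : Cpx) : Cpx := (r * fst z, r * snd z).

Definition expoly (nu : Cpx) (k : nat) (x : R) : Cpx :=
  rscale (x ^ k / INR (fact k)) (cexp nu x).

Lemma cexp_deriv nu : IsDeriv (cexp nu) (fun x => Cmul nu (cexp nu x)).
Proof.
  intros x; split; simpl;
    [eapply dpl_ext; [apply wcos_deriv | ring] | eapply dpl_ext; [apply wsin_deriv | ring]].
Qed.

Lemma monomial_deriv k :
  IsDerivR (fun x => x ^ S k / INR (fact (S k))) (fun x => x ^ k / INR (fact k)).
Proof.
  intros x. eapply dpl_ext; [apply derivable_pt_lim_div_scal, derivable_pt_lim_pow|].
  simpl pred. rewrite fact_simpl, mult_INR. field.
  split; [apply INR_fact_neq_0 | apply not_0_INR; lia].
Qed.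

Lemma expoly_deriv_0 nu : IsDeriv (expoly nu 0) (fun x => Cmul nu (expoly nu 0 x)).
Proof.
  intros x; destruct (cexp_deriv nu x) as [H1 H2]. unfold expoly, rscale; simpl.
  split; (eapply dpl_ext; [apply dpl_scal; eauto | simpl; field]).
Qed.

Lemma expoly_deriv_S nu k :
  IsDeriv (expoly nu (S k)) (fun x => Cadd (expoly nu k x) (Cmul nu (expoly nu (S k) x))).
Proof.
  intros x; destruct (cexp_deriv nu x) as [H1 H2]. unfold expoly, rscale; simpl.
  split; (eapply dpl_ext; [apply dpl_mult; [apply monomial_deriv | eauto] | simpl; ring]).
Qed.

(** [expoly_table nu j k] is the j-th derivative of [expoly nu k]. *)
Fixpoint expoly_table (nu : Cpx) (j : nat) : nat -> R -> Cpx :=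
  match j with
  | O => fun k => expoly nu k
  | S j' => fun k x => match k with
                       | O => Cmul nu (expoly_table nu j' O x)
                       | S k' => Cadd (expoly_table nu j' k' x) (Cmul nu (expoly_table nu j' k x))
                       end
  end.

Definition expoly_seq (nu : Cpx) (k : nat) : nat -> R -> Cpx := fun j => expoly_table nu j k.

Lemma DSeq_expoly nu k : DSeq (expoly_seq nu k).
Proof.
  intros j; revert k; unfold expoly_seq; induction j; intros [|k]; simpl.
  - apply expoly_deriv_0.
  - apply expoly_deriv_S.
  - now apply IsDeriv_cmul.
  - apply IsDeriv_add; [|apply IsDeriv_cmul]; auto.
Qed.

Lemma IsDerivSeq_expoly nu k : IsDerivSeq (expoly nu k) (expoly_seq nu k).
Proof. split; [reflexivity | apply DSeq_expoly]. Qed.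

Lemma factor_step_expoly nu k : factor_step nu (expoly_seq nu (S k)) = expoly_seq nu k.
Proof. extensionality j; extensionality x; unfold factor_step, expoly_seq; simpl. cring. Qed.

Lemma factor_step_expoly_0 nu : factor_step nu (expoly_seq nu 0) = zero_seq.
Proof. extensionality j; extensionality x; unfold factor_step, expoly_seq, zero_seq, C0; simpl. cring. Qed.

Lemma apply_factors_repeat nu j i :
  apply_factors (repeat nu j) (expoly_seq nu (j + i)) = expoly_seq nu i.
Proof.
  revert i; induction j; intros i; auto. simpl repeat.
  rewrite apply_factors_cons. change (S j + i)%nat with (S (j + i)).
  now rewrite factor_step_expoly.
Qed.

Lemma expoly_annihilated nu k m :
  (k < m)%nat -> apply_factors (repeat nu m) (expoly_seq nu k) = zero_seq.
Proof.
  intros H. replace m with (k + S (m - k - 1))%nat by lia.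
  pose proof (apply_factors_repeat nu k 0) as E. rewrite Nat.add_0_r in E.
  rewrite repeat_app, apply_factors_app, E. simpl repeat.
  now rewrite apply_factors_cons, factor_step_expoly_0, apply_factors_zero.
Qed.

Lemma Cmul_integral u v : Cmul u v = C0 -> u = C0 \/ v = C0.
Proof.
  destruct u as [u1 u2], v as [v1 v2]; unfold Cmul, C0; simpl; intros H.
  injection H as H1 H2.
  assert (Hn : (u1 * u1 + u2 * u2) * (v1 * v1 + v2 * v2) = 0).
  { replace ((u1 * u1 + u2 * u2) * (v1 * v1 + v2 * v2))
      with ((u1 * v1 - u2 * v2) ^ 2 + (u1 * v2 + u2 * v1) ^ 2) by ring.
    rewrite H1, H2; ring. }
  apply Rmult_integral in Hn as [Hn|Hn]; [left|right]; apply Cpx_eq; simpl; nra.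
Qed.

Definition cscale (c : Cpx) (D : nat -> R -> Cpx) : nat -> R -> Cpx :=
  fun j x => Cmul c (D j x).

(** e^(nu x) is an eigenfunction of every factor d/dx - rho, with eigenvalue
    nu - rho, nonzero unless rho = nu. *)
Lemma apply_factors_eigen nu r : (forall rho, In rho r -> rho <> nu) -> forall c, c <> C0 ->
  exists c', c' <> C0 /\ apply_factors r (cscale c (expoly_seq nu 0)) = cscale c' (expoly_seq nu 0).
Proof.
  induction r as [|rho r IH]; intros Hr c Hc; [now exists c|].
  rewrite apply_factors_cons.
  replace (factor_step rho (cscale c (expoly_seq nu 0)))
    with (cscale (Cmul c (Csub nu rho)) (expoly_seq nu 0)).
  - apply IH; [intros; apply Hr; now right|].
    intros H; apply Cmul_integral in H as [H|H]; auto.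
    apply (Hr rho); [now left|]. destruct nu, rho; unfold Csub, C0 in H; simpl in H.
    injection H; intros; apply Cpx_eq; simpl; lra.
  - extensionality j; extensionality x; unfold factor_step, cscale, expoly_seq; simpl. cring.
Qed.

Lemma expoly_at_0 nu : expoly nu 0 0 = (1, 0).
Proof.
  unfold expoly, cexp, rscale, wcos, wsin; simpl.
  rewrite !Rmult_0_r, Rplus_0_r, exp_0, cos_0, sin_0. apply Cpx_eq; simpl; field.
Qed.

(** With m the exact multiplicity of nu, x^m e^(nu x) is not killed: the result is
    a nonzero multiple of e^(nu x), which does not vanish at 0. *)
Lemma expoly_survives l nu : apply_factors l (expoly_seq nu (mult l nu)) O 0 <> C0.
Proof.
  destruct (perm_mult l nu) as [rest [Hp Hn]].
  rewrite (apply_factors_perm _ _ Hp), apply_factors_app.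
  pose proof (apply_factors_repeat nu (mult l nu) 0) as E. rewrite Nat.add_0_r in E.
  rewrite E.
  replace (expoly_seq nu 0) with (cscale (1, 0) (expoly_seq nu 0))
    by (extensionality j; extensionality x; unfold cscale; cring).
  destruct (apply_factors_eigen nu rest) with (c := (1, 0) : Cpx) as [c' [Hc' ->]].
  { intros rho Hr Erho; subst; auto. }
  { unfold C0; intro H; injection H; lra. }
  unfold cscale, expoly_seq; simpl. rewrite expoly_at_0. intros Hz; apply Hc'.
  rewrite <- Hz. destruct c'; unfold Cmul; apply Cpx_eq; simpl; ring.
Qed.

Lemma expoly_conj nu j k x : expoly_table (Cconj nu) j k x = Cconj (expoly_table nu j k x).
Proof.
  revert k x; induction j; intros k x; simpl.
  - unfold expoly, rscale, cexp, wcos, wsin, Cconj; simpl.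
    replace (- snd nu * x + 0) with (- (snd nu * x + 0)) by ring.
    rewrite cos_neg, sin_neg. apply Cpx_eq; simpl; ring.
  - destruct k; rewrite ?IHj; destruct nu; unfold Cconj, Cmul, Cadd; apply Cpx_eq; simpl; ring.
Qed.

Definition ConjSymmetric (l : list Cpx) : Prop := forall nu, mult l nu = mult l (Cconj nu).

Lemma Cconj_involutive z : Cconj (Cconj z) = z.
Proof. destruct z; unfold Cconj; simpl; f_equal; ring. Qed.

(** If E is closed under conjugation, every exponent occurs at most as often as its
    conjugate: otherwise x^m e^(nu x) with m = mult (conj nu) lies in E while its
    conjugate x^m e^(conj nu x) escapes the kernel. *)
Lemma mult_le_mult_conj lam n : ConjClosed lam n ->
  forall nu, (mult (exponents lam (S n)) nu <= mult (exponents lam (S n)) (Cconj nu))%nat.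
Proof.
  intros HC nu. set (L := exponents lam (S n)). set (m := mult L (Cconj nu)).
  destruct (Nat.le_gt_cases (mult L nu) m) as [Hle|Hlt]; auto. exfalso.
  assert (Hin : InE lam n (expoly nu m)).
  { split; [eexists; apply IsDerivSeq_expoly|].
    apply (OpKer_apply_factors lam (S n) _ _ (IsDerivSeq_expoly nu m)). intros x.
    destruct (perm_mult L nu) as [rest [Hp _]].
    fold L. rewrite (apply_factors_perm _ _ Hp), apply_factors_app.
    now rewrite expoly_annihilated, apply_factors_zero. }
  destruct (HC _ Hin) as [_ Hop].
  assert (Hconj : IsDerivSeq (fun x => Cconj (expoly nu m x)) (expoly_seq (Cconj nu) m)).
  { split; [intros x; apply (expoly_conj nu 0) | apply DSeq_expoly]. }
  apply (expoly_survives L (Cconj nu)).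
  now apply (OpKer_apply_factors lam (S n) _ _ Hconj).
Qed.

Lemma conj_closed_symmetric lam n : ConjClosed lam n -> ConjSymmetric (exponents lam (S n)).
Proof.
  intros HC nu. apply Nat.le_antisymm; [now apply mult_le_mult_conj|].
  rewrite <- (Cconj_involutive nu) at 2. now apply mult_le_mult_conj.
Qed.

Definition re_seq (H : nat -> R -> Cpx) (j : nat) : R -> R := fun x => fst (H j x).

Lemma re_seq_deriv H j : DSeq H -> IsDerivR (re_seq H j) (re_seq H (S j)).
Proof. intros HS x; now destruct (HS j x). Qed.

Lemma re_seq_smooth H j : DSeq H -> SmoothR (re_seq H j).
Proof.
  intros HS. replace (re_seq H j) with (re_seq H (j + 0)) by now rewrite Nat.add_0_r.
  apply (SmoothR_of_seq (fun i => re_seq H (j + i))). intros i.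
  rewrite Nat.add_succ_r. now apply re_seq_deriv.
Qed.

(** [ZeroBound a b l]: every real function annihilated by prod_(mu in l) (d/dx - mu)
    which has at least |l| zeros in [a,b], counted with multiplicity, is zero.
    (A real function is given by a derivative sequence with zero imaginary parts.) *)
Definition ZeroBound (a b : R) (l : list Cpx) : Prop :=
  forall H, DSeq H -> (forall j x, snd (H j x) = 0) ->
  (forall x, apply_factors l H O x = C0) ->
  forall zs, KeySorted zs -> ZerosIn a b (re_seq H O) zs -> (length l <= mult_sum zs)%nat ->
  forall x, re_seq H O x = 0.

Lemma zero_bound_nil a b : ZeroBound a b nil.
Proof. intros H _ _ HK _ _ _ _ x. unfold re_seq. specialize (HK x). cbn in HK. now rewrite HK. Qed.

Lemma zero_bound_perm a b l l' : Permutation l l' -> ZeroBound a b l -> ZeroBound a b l'.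
Proof.
  intros Hp HB H HS HR HK zs Hs Hg Hlen. apply (HB H HS HR) with zs; auto.
  - intros x. now rewrite (apply_factors_perm _ _ Hp).
  - now rewrite (Permutation_length Hp).
Qed.

Lemma zero_bound_real a b mu l : snd mu = 0 -> ZeroBound a b l -> ZeroBound a b (mu :: l).
Proof.
  intros Hm HB H HS HR HK zs Hs Hg Hlen.
  set (K := factor_step mu H).
  assert (HK0 : forall y, re_seq K 0 y = re_seq H 1 y - fst mu * re_seq H 0 y).
  { intros y; unfold re_seq, K, factor_step, Csub, Cmul; simpl. rewrite HR, Hm; ring. }
  destruct (real_factor_step (fst mu) (re_seq H 0) (re_seq H 1) (re_seq_deriv H 0 HS) a b zs)
    as [l1 [S1 [G1 Sum1]]]; auto.
  { exists (re_seq H 2); now apply re_seq_deriv. }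
  assert (K0 : forall y, re_seq K 0 y = 0).
  { apply (HB K) with (zs := l1); auto.
    - now apply DSeq_factor_step.
    - intros j y; unfold K, factor_step, Csub, Cmul; simpl. rewrite !HR, Hm; ring.
    - eapply ZerosIn_ext; [|exact G1]. intros; now rewrite HK0.
    - simpl in Hlen; lia. }
  destruct (ZerosIn_witness a b _ zs Hg ltac:(simpl in Hlen; lia)) as [z [_ Hz]].
  apply (real_factor_kernel (fst mu) _ (re_seq H 1) (re_seq_deriv H 0 HS) z); auto.
  intros y; now rewrite <- HK0.
Qed.

(** On [a,b] with be (b - a) < pi, the phase c = (pi - be (a + b)) / 2 keeps
    be x + c inside (0, pi). *)
Lemma sin_phase_pos a b be : 0 <= be -> be * (b - a) < PI ->
  forall x, a <= x <= b -> 0 < sin (be * x + (PI - be * (a + b)) / 2).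
Proof.
  intros Hbe Hb x Hx. apply sin_gt_0.
  - assert (0 <= be * (x - a)) by (apply Rmult_le_pos; lra). nra.
  - assert (0 <= be * (b - x)) by (apply Rmult_le_pos; lra). nra.
Qed.

Lemma zero_bound_pair a b mu l : snd mu <> 0 -> (b - a) * Rabs (snd mu) < PI ->
  ZeroBound a b l -> ZeroBound a b (mu :: Cconj mu :: l).
Proof.
  intros Hm Hb HB H HS HR HK zs Hs Hg Hlen.
  set (K := factor_step (Cconj mu) (factor_step mu H)).
  set (al := fst mu). set (be := Rabs (snd mu)). set (c := (PI - be * (a + b)) / 2).
  assert (Hbe2 : be * be = snd mu * snd mu).
  { unfold be. rewrite <- Rabs_mult. apply Rabs_pos_eq. nra. }
  assert (Hbe : 0 < be) by (now apply Rabs_pos_lt).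
  assert (HK0 : forall y, re_seq K 0 y =
     re_seq H 2 y - 2 * al * re_seq H 1 y + (al * al + be * be) * re_seq H 0 y).
  { intros y; rewrite Hbe2; unfold re_seq, K, factor_step, Csub, Cmul, Cconj, al; simpl.
    rewrite !HR; ring. }
  assert (Hsin := sin_phase_pos a b be ltac:(lra) ltac:(fold be in Hb; lra)).
  fold c in Hsin.
  pose proof (re_seq_deriv H 0 HS) as D0. pose proof (re_seq_deriv H 1 HS) as D1.
  destruct (pair_step_first al be c a b _ _ _ _ D0 D1 HK0 Hsin zs Hs Hg)
    as [l1 [S1 [G1 Sum1]]].
  destruct (pair_step_second al be c a b _ _ _ _ D0 D1 HK0 Hsin l1) as [l2 [S2 [G2 Sum2]]]; auto.
  { now apply re_seq_smooth, DSeq_factor_step, DSeq_factor_step. }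
  { exists (re_seq K 1); now apply re_seq_deriv, DSeq_factor_step, DSeq_factor_step. }
  assert (K0 : forall y, re_seq K 0 y = 0).
  { apply (HB K) with (zs := l2); auto.
    - now apply DSeq_factor_step, DSeq_factor_step.
    - intros j y; unfold K, factor_step, Csub, Cmul, Cconj; simpl. rewrite !HR; ring.
    - simpl in Hlen; lia. }
  destruct (ZerosIn_witness a b _ zs Hg ltac:(simpl in Hlen; lia)) as [z0 [Hz0 Hz00]].
  destruct (ZerosIn_witness a b _ l1 G1 ltac:(simpl in Hlen; lia)) as [z1 [_ Hz10]].
  apply (pair_kernel al be c a b _ _ _ _ D0 D1 HK0 Hsin z0 z1); auto; lra.
Qed.

Lemma symmetric_real_tail x l : ConjSymmetric (x :: l) -> Cconj x = x -> ConjSymmetric l.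
Proof.
  intros H Hx nu. specialize (H nu). rewrite !mult_cons in H.
  destruct (Ceq_dec x nu) as [e1|e1], (Ceq_dec x (Cconj nu)) as [e2|e2]; try lia.
  - subst; congruence.
  - subst x; rewrite Cconj_involutive in Hx; congruence.
Qed.

Lemma symmetric_pair_tail x l : ConjSymmetric (x :: Cconj x :: l) -> ConjSymmetric l.
Proof.
  intros H nu. specialize (H nu). rewrite !mult_cons in H.
  assert (E1 : x = nu <-> Cconj x = Cconj nu).
  { split; [now intros -> | intros E; now rewrite <- (Cconj_involutive x), E, Cconj_involutive]. }
  assert (E2 : x = Cconj nu <-> Cconj x = nu).
  { split; [intros ->; apply Cconj_involutive | intros <-; now rewrite Cconj_involutive]. }
  destruct (Ceq_dec x nu), (Ceq_dec x (Cconj nu)), (Ceq_dec (Cconj x) nu),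
    (Ceq_dec (Cconj x) (Cconj nu)); try lia; tauto.
Qed.

Lemma symmetric_perm l l' : Permutation l l' -> ConjSymmetric l -> ConjSymmetric l'.
Proof.
  intros Hp H nu. unfold mult. rewrite <- !(proj1 (Permutation_count_occ Ceq_dec l l') Hp).
  apply H.
Qed.

Lemma symmetric_pair_split mu l : ConjSymmetric (mu :: l) -> Cconj mu <> mu ->
  exists l2, Permutation l (Cconj mu :: l2) /\ ConjSymmetric l2.
Proof.
  intros HS Hneq.
  assert (Hin : In (Cconj mu) l).
  { apply (count_occ_In Ceq_dec). specialize (HS mu). fold (mult l (Cconj mu)).
    rewrite !mult_cons in HS.
    destruct (Ceq_dec mu mu), (Ceq_dec mu (Cconj mu)); try congruence; lia. }
  destruct (in_split _ _ Hin) as [u [w ->]].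
  assert (Hp : Permutation (u ++ Cconj mu :: w) (Cconj mu :: u ++ w))
    by apply Permutation_sym, Permutation_middle.
  exists (u ++ w); split; auto.
  apply (symmetric_pair_tail mu). now apply (symmetric_perm _ _ (perm_skip mu Hp)).
Qed.

Definition Admissible (a b : R) (mu : Cpx) : Prop :=
  snd mu = 0 \/ (b - a) * Rabs (snd mu) < PI.

Lemma zero_bound_symmetric a b : forall l, ConjSymmetric l ->
  (forall mu, In mu l -> Admissible a b mu) -> ZeroBound a b l.
Proof.
  intros l. induction l as [l IH] using (induction_ltof1 _ (@length Cpx)); unfold ltof in IH.
  destruct l as [|mu l]; intros HS Hadm; [apply zero_bound_nil|].
  destruct (Req_EM_T (snd mu) 0) as [Hm|Hm].
  - apply zero_bound_real; auto. apply IH; simpl; auto.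
    apply (symmetric_real_tail mu); auto.
    destruct mu; unfold Cconj; simpl in *; rewrite Hm; f_equal; ring.
    intros nu Hnu; apply Hadm; now right.
  - assert (Hneq : Cconj mu <> mu).
    { destruct mu; unfold Cconj; simpl in *; intros E; injection E; intros; lra. }
    destruct (symmetric_pair_split mu l HS Hneq) as [l2 [Hp HS2]].
    apply (zero_bound_perm a b (mu :: Cconj mu :: l2)); [now apply perm_skip, Permutation_sym|].
    apply zero_bound_pair; auto.
    + destruct (Hadm mu (or_introl eq_refl)); [contradiction | auto].
    + apply IH; auto.
      * simpl; rewrite (Permutation_length Hp); simpl; lia.
      * intros nu Hnu. apply Hadm. right. apply (Permutation_in _ (Permutation_sym Hp)). now right.
Qed.

Lemma MaxAbsIm_ge lam n j : (j <= n)%nat -> Rabs (Im (lam j)) <= MaxAbsIm lam n.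
Proof.
  induction n; intros Hj; simpl.
  - replace j with 0%nat by lia; lra.
  - destruct (Nat.eq_dec j (S n)) as [->|Hne]; [apply Rmax_r|].
    eapply Rle_trans; [apply IHn; lia | apply Rmax_l].
Qed.

Lemma exponents_spec lam k mu : In mu (exponents lam k) -> exists j, (j < k)%nat /\ mu = lam j.
Proof.
  induction k; simpl; intros H; [contradiction|]. destruct H as [<-|H]; [exists k; split; auto|].
  destruct (IHk H) as [j [Hj ->]]; exists j; split; auto.
Qed.

Lemma exponents_length lam k : length (exponents lam k) = k.
Proof. induction k; simpl; auto. Qed.

Lemma exponents_admissible lam n a b : a < b ->
  (MaxAbsIm lam n = 0 \/ b - a < PI / MaxAbsIm lam n) ->
  forall mu, In mu (exponents lam (S n)) -> Admissible a b mu.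
Proof.
  intros Hab HM mu Hmu. destruct (exponents_spec lam (S n) mu Hmu) as [j [Hj ->]].
  pose proof (MaxAbsIm_ge lam n j ltac:(lia)) as Hle. unfold Im in Hle.
  set (M := MaxAbsIm lam n) in *. pose proof (Rabs_pos (snd (lam j))).
  destruct HM as [HM|HM].
  - left. rewrite HM in Hle. destruct (Req_dec (snd (lam j)) 0) as [Z|Z]; auto.
    apply Rabs_no_R0 in Z. lra.
  - right. destruct (Rle_lt_dec M 0) as [HM0|HM0].
    { rewrite (Rle_antisym M 0) in HM by lra. unfold Rdiv in HM. rewrite Rinv_0 in HM.
      pose proof PI_RGT_0. lra. }
    apply (Rmult_lt_compat_r M) in HM; auto. unfold Rdiv in HM.
    rewrite Rmult_assoc, Rinv_l in HM by lra.
    assert ((b - a) * Rabs (snd (lam j)) <= (b - a) * M) by (apply Rmult_le_compat_l; lra).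
    lra.
Qed.

Lemma ZeroOfOrder_seq f D z k : IsDerivSeq f D -> ZeroOfOrder f z k ->
  forall j, (j < k)%nat -> D j z = C0.
Proof. intros HD [D' [HD' [Hz _]]]. now rewrite (DerivSeq_unique f D D'). Qed.

Definition conj_seq (D : nat -> R -> Cpx) : nat -> R -> Cpx := fun j x => Cconj (D j x).

Lemma conj_seq_annihilated lam n D : ConjClosed lam n -> DSeq D ->
  (forall x, apply_factors (exponents lam (S n)) D O x = C0) ->
  forall x, apply_factors (exponents lam (S n)) (conj_seq D) O x = C0.
Proof.
  intros HC HS HK.
  assert (HD : IsDerivSeq (D O) D) by (split; auto).
  assert (Hin : InE lam n (D O)).
  { split; [now exists D | now apply (OpKer_apply_factors _ _ _ _ HD)]. }
  destruct (HC _ Hin) as [_ Hop].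
  apply (OpKer_apply_factors lam (S n) (fun x => Cconj (D O x))); auto.
  split; [reflexivity | intros k; apply IsDeriv_conj, HS].
Qed.

Definition re_part (D : nat -> R -> Cpx) : nat -> R -> Cpx := fun j x => (fst (D j x), 0).

Lemma re_part_lin_comb D : re_part D = lin_comb (1/2, 0) D (1/2, 0) (conj_seq D).
Proof.
  extensionality j; extensionality x. unfold re_part, lin_comb, conj_seq, Cconj, Cmul, Cadd.
  apply Cpx_eq; simpl; field.
Qed.

Lemma real_part_vanishes lam n a b D zs : ConjClosed lam n -> a < b ->
  (MaxAbsIm lam n = 0 \/ b - a < PI / MaxAbsIm lam n) ->
  DSeq D -> (forall x, apply_factors (exponents lam (S n)) D O x = C0) ->
  NoDup (map fst zs) ->
  (forall p, In p zs -> a <= fst p <= b /\ (1 <= snd p)%nat /\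
                        forall j, (j < snd p)%nat -> D j (fst p) = C0) ->
  (n < mult_sum zs)%nat -> forall x, fst (D O x) = 0.
Proof.
  intros HC Hab HM HS HK Hnd Hzs Hgt.
  assert (HSre : DSeq (re_part D)).
  { rewrite re_part_lin_comb. apply DSeq_lin_comb; auto. intros k; apply IsDeriv_conj, HS. }
  apply (zero_bound_symmetric a b (exponents lam (S n)) (conj_closed_symmetric lam n HC)
           (exponents_admissible lam n a b Hab HM) (re_part D) HSre)
    with (zs := insertion_sort zs); auto.
  - intros x. rewrite re_part_lin_comb, apply_factors_lin_comb. unfold lin_comb.
    rewrite HK, conj_seq_annihilated; auto. cring.
  - now apply insertion_sort_sorted.
  - intros p Hp. apply (Permutation_in _ (insertion_sort_perm zs)) in Hp.
    destruct (Hzs p Hp) as [Hpab [Hk Hz]]. repeat split; try lra; auto.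
    apply (VanishesTo_of_seq (re_seq (re_part D))); [intros; now apply re_seq_deriv|].
    intros j Hj. unfold re_seq, re_part. now rewrite Hz.
  - rewrite exponents_length, (mult_sum_perm _ _ (insertion_sort_perm zs)). lia.
Qed.

(** Multiplying by -i keeps the sequence annihilated and turns Im f into Re (-i f). *)
Lemma DSeq_cscale c D : DSeq D -> DSeq (cscale c D).
Proof. intros HS k. now apply IsDeriv_cmul. Qed.

Lemma apply_factors_cscale l c D : apply_factors l (cscale c D) = cscale c (apply_factors l D).
Proof.
  revert D; induction l as [|mu l IH]; intros D; auto.
  rewrite !apply_factors_cons, <- IH. f_equal.
  extensionality j; extensionality x; unfold factor_step, cscale. cring.
Qed.

Theorem mainTheorem6 (lam : nat -> Cpx) (n : nat) :
  ConjClosed lam n ->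
  forall a b : R, a < b ->
    (MaxAbsIm lam n = 0 \/ b - a < PI / MaxAbsIm lam n) ->
    ExtChebyshevOn lam n a b.
Proof.
  intros HC a b Hab HM f [[D HD] Hop] [x0 Hx0] zs Hnd Hzs.
  assert (HK := proj1 (OpKer_apply_factors lam (S n) f D HD) Hop).
  assert (Hzeros : forall p, In p zs -> a <= fst p <= b /\ (1 <= snd p)%nat /\
                     forall j, (j < snd p)%nat -> D j (fst p) = C0).
  { intros p Hp. destruct (Hzs p Hp) as [? [? Hz]]. split; [|split]; auto.
    now apply (ZeroOfOrder_seq f). }
  destruct (Nat.le_gt_cases (mult_sum zs) n) as [Hle|Hgt]; [exact Hle|].
  exfalso. apply Hx0. destruct HD as [HD0 HS]. rewrite <- HD0.
  (* Re f = 0, and Im f = Re (-i f) = 0 *)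
  apply Cpx_eq; simpl.
  - now apply (real_part_vanishes lam n a b D zs).
  - assert (E : forall x, fst (cscale (0, -1) D O x) = snd (D O x))
      by (intros; unfold cscale, Cmul; simpl; ring).
    rewrite <- E. apply (real_part_vanishes lam n a b _ zs); auto.
    + now apply DSeq_cscale.
    + intros x. rewrite apply_factors_cscale. unfold cscale. rewrite HK. cring.
    + intros p Hp. destruct (Hzeros p Hp) as [? [? Hz]]. split; [|split]; auto.
      intros j Hj. unfold cscale. rewrite Hz by auto. cring.
Qed.
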